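(* Let $X=\{e_1,e'_1,e_2,e'_2\}$ be the trivial quandle of order $4$ (i.e. $x^y=x$ for all $x,y$), let $\rho:X\to X$ be the good involution with $\rho(e_i)=e'_i$, $\rho(e'_i)=e_i$ ($i=1,2$), let $Y=\{e\}$ (a one-point $(X,\rho)$-set), and let $\theta:\mathbb{Z}(Y\times X^2)\to\mathbb{Z}$ be the linear extension of $\theta=\chi_{(e,e_1,e_2)}+\chi_{(e,e'_1,e'_2)}-\chi_{(e,e'_1,e_2)}-\chi_{(e,e_1,e'_2)}$, where $\chi_{(e,a,b)}(e,x,y)=1$ if $(x,y)=(a,b)$ and $0$ otherwise. Let $D$ be a diagram of a $2$-component unoriented link $L$. Then $\Phi_\theta(D)=\{m,m,m,m,-m,-m,-m,-m,0,0,0,0,0,0,0,0\}$, where $m$ is the linking number of $D$ when $D$ is given an orientation.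
   Context: For a symmetric quandle $(X,\rho)$ (here: a quandle with an involution $\rho$ satisfying $\rho(x^y)=\rho(x)^y$ and $x^{\rho(y)}=x^{y^{-1}}$; for a trivial quandle every involution qualifies) and a one-point set $Y=\{e\}$ with trivial action, an $(X,\rho)_Y$-coloring of an unoriented link diagram $D\subset\mathbb{R}^2$ is defined as follows. Semi-arcs are the arcs obtained by cutting the over-arcs of $D$ at crossings. Assign to each semi-arc a normal orientation and an element of $X$ such that at each crossing: (i) the two over semi-arcs, labeled $x_1,x_2$, satisfy $x_1=x_2$ if their normal orientations are coherent and $x_1=\rho(x_2)$ otherwise; (ii) if the under semi-arcs $e_1,e_2$ are labeled $x_1,x_2$ and an over semi-arc labeled $x_3$ has normal pointing from $e_1$ to $e_2$, then $x_1^{x_3}=x_2$ if the normals of $e_1,e_2$ are coherent and $x_1^{x_3}=\rho(x_2)$ otherwise. A coloring is an equivalence class of such assignments under basic inversions (reversing the normal of one semi-arc and replacing its label $x$ by $\rho(x)$); all regions are labeled $e$. The weight of a crossing $v$: pick a region $f$ at $v$; let the under and over semi-arcs facing $f$ have (after basic inversions) normals $n_1,n_2$ pointing away from $f$ and labels $x_1,x_2$; with $\epsilon=+1$ if $(n_2,n_1)$ is a positive basis of $\mathbb{R}^2$ and $-1$ otherwise, the weight is $\epsilon(e,x_1,x_2)$. $c_{D,C}$ is the sum of the weights of all crossings, and $\Phi_\theta(D)=\{\theta(c_{D,C})\mid C\text{ a coloring of }D\}$ as a multi-set (set with repetitions). *)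

(* Combinatorial model of unoriented link diagrams in R^2
   (planar-diagram codes with a planarity condition) and of
   (X,rho)_Y-colorings with Y = {e} a one-point set. *)
From HB Require Import structures.
From mathcomp Require Import all_boot all_order all_algebra.
Unset Printing Implicit Defensive.
Import GRing.Theory Num.Theory.

(* A diagram with n crossings: each crossing c has four "slots"
   (c,0),(c,1),(c,2),(c,3), the four ends of semi-arcs meeting at c,
   listed COUNTERCLOCKWISE around the crossing point.  Slots 0 and 2 are the
   ends of the under strand, slots 1 and 3 those of the over strand.
   [glue] is a fixed-point-free involution pairing the two ends of each
   semi-arc (an edge of the underlying 4-valent plane graph).
   [nfree] is the number of crossingless circle components. *)
Definition slot (n : nat) := ('I_n * 'I_4)%type.

Definition i0 : 'I_4 := @Ordinal 4 0 isT.
Definition i1 : 'I_4 := @Ordinal 4 1 isT.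
Definition i2 : 'I_4 := @Ordinal 4 2 isT.
Definition i3 : 'I_4 := @Ordinal 4 3 isT.

Definition rot4 (k : 'I_4) : 'I_4 := inord (k.+1 %% 4).
Definition opp4 (k : 'I_4) : 'I_4 := inord ((k + 2) %% 4).

Record diagram := Diagram {
  ncross : nat;
  nfree : nat;
  glue : slot ncross -> slot ncross }.

Definition wf_diagram (D : diagram) : Prop :=
  (forall s, glue D (glue D s) = s) /\ (forall s, glue D s != s).

(* Planarity: the combinatorial map (rotation = ccw order of slots, edge
   involution = glue) has genus 0 on every connected component, i.e. by
   Euler's formula  V - E + F = 2 * (#connected components), with
   V = n, E = 2n, faces = orbits of rotation o glue. *)
Definition sigma (D : diagram) (s : slot (ncross D)) : slot (ncross D) :=
  (s.1, rot4 s.2).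
Definition face_perm (D : diagram) (s : slot (ncross D)) : slot (ncross D) :=
  sigma D (glue D s).
Definition nfaces (D : diagram) : nat :=
  #|[set [set t | fconnect (face_perm D) s t] | s : slot (ncross D)]|.
Definition graph_rel (D : diagram) : rel (slot (ncross D)) :=
  fun s t => [|| t == sigma D s, s == sigma D t, t == glue D s | s == glue D t].
Definition ngraphcomp (D : diagram) : nat :=
  #|[set [set t | connect (graph_rel D) s t] | s : slot (ncross D)]|.
Definition planar (D : diagram) : Prop :=
  nfaces D = (ncross D + 2 * ngraphcomp D)%N.

(* Link components: generated by going along a semi-arc (glue) and going
   straight through a crossing (slot k <-> slot k+2). *)
Definition strand_rel (D : diagram) : rel (slot (ncross D)) :=
  fun s t => [|| t == glue D s, s == glue D t,
                 t == (s.1, opp4 s.2) | s == (t.1, opp4 t.2)].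
Definition link_comp (D : diagram) (s : slot (ncross D)) : {set slot (ncross D)} :=
  [set t | connect (strand_rel D) s t].
Definition ncomponents (D : diagram) : nat :=
  (#|[set link_comp D s | s : slot (ncross D)]| + nfree D)%N.

(* Orientations: o s = true iff the oriented semi-arc ending at slot s
   enters the crossing there. *)
Definition orientation (D : diagram) (o : slot (ncross D) -> bool) : Prop :=
  [/\ forall s, o (glue D s) = ~~ o s,
      forall c, o (c, i0) != o (c, i2) &
      forall c, o (c, i1) != o (c, i3)].

(* With slot k in direction v_k = (cos k pi/2, sin k pi/2), the sign of an
   oriented crossing is sign det(t_over, t_under) (right-handed = +1);
   computing the tangents gives: +1 iff o(c,0) != o(c,1). *)
Definition crossing_sign (D : diagram) (o : slot (ncross D) -> bool) (c : 'I_(ncross D)) : int :=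
  if o (c, i0) != o (c, i1) then 1%R else (-1)%R.

Definition linking_number (D : diagram) (o : slot (ncross D) -> bool) : int :=
  ((\sum_(c < ncross D | link_comp D (c, i0) != link_comp D (c, i1))
      crossing_sign D o c) %/ 2)%Z.

(* A normal orientation of a semi-arc is encoded by the tangent
   orientation t with normal = t rotated by +90 degrees.  An assignment
   gives, at every slot s, (dir, label): dir = true iff the tangent enters
   the crossing at s; the label is that of the semi-arc.  Free circles get
   a (normal, label) pair each.  At slot k: dir = true -> normal v_(k-1),
   dir = false -> normal v_(k+1). *)
Section Colorings.
Variables (X : finType) (op : X -> X -> X) (rho : X -> X) (theta : X -> X -> int).

Definition assign (D : diagram) :=
  ({ffun slot (ncross D) -> bool * X} * {ffun 'I_(nfree D) -> bool * X})%type.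

(* Crossing conditions (i) and (ii); d = dirs, l = labels at slots 0..3.
   Normals of slots 1,3 coherent iff d 1 != d 3; of slots 0,2 iff d 0 != d 2.
   Over semi-arc at slot 1 has normal v_0 if d 1 (pointing from the slot-2
   under semi-arc to the slot-0 one), v_2 otherwise; slot 3: v_2 if d 3,
   v_0 otherwise. *)
Definition cross_ok (d : 'I_4 -> bool) (l : 'I_4 -> X) : bool :=
  let cohO := d i1 != d i3 in
  let cohU := d i0 != d i2 in
  [&& l i1 == (if cohO then l i3 else rho (l i3)),
      (if d i1 then op (l i2) (l i1) == (if cohU then l i0 else rho (l i0))
       else op (l i0) (l i1) == (if cohU then l i2 else rho (l i2))) &
      (if d i3 then op (l i0) (l i3) == (if cohU then l i2 else rho (l i2))
       else op (l i2) (l i3) == (if cohU then l i0 else rho (l i0)))].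

Definition is_coloring (D : diagram) (a : assign D) : bool :=
  [forall s, ((a.1 (glue D s)).1 == ~~ (a.1 s).1)
             && ((a.1 (glue D s)).2 == (a.1 s).2)]
  && [forall c, cross_ok (fun k => (a.1 (c, k)).1) (fun k => (a.1 (c, k)).2)].

Definition binv (f : bool) (p : bool * X) : bool * X :=
  if f then (~~ p.1, rho p.2) else p.

Definition inv_equiv (D : diagram) (a b : assign D) : bool :=
  [exists f : {ffun slot (ncross D) -> bool},
   exists g : {ffun 'I_(nfree D) -> bool},
     [&& [forall s, f (glue D s) == f s],
         [forall s, b.1 s == binv (f s) (a.1 s)] &
         [forall i, b.2 i == binv (g i) (a.2 i)]]].

Definition colorings (D : diagram) : {set {set assign D}} :=
  [set [set b | inv_equiv D a b] | a in [set a | is_coloring D a]].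

(* Weight at crossing c computed with the region f between slots 0 and 1:
   under semi-arc facing f is at slot 0, over one at slot 1.  Normals
   pointing away from f: n1 = v_3 (slot 0), n2 = v_2 (slot 1); labels are
   replaced by rho(.) when the normal has to be inverted. *)
Definition eps01 : int :=
  let n1 := (0%R, (-1)%R) : int * int in
  let n2 := ((-1)%R, 0%R) : int * int in
  if (0 < n2.1 * n1.2 - n2.2 * n1.1)%R then 1%R else (-1)%R.

Definition weight (D : diagram) (a : assign D) : int :=
  \sum_(c < ncross D)
    let d k := (a.1 (c, k)).1 in
    let l k := (a.1 (c, k)).2 in
    (eps01 * theta (if d i0 then l i0 else rho (l i0))
                   (if d i1 then rho (l i1) else l i1))%R.

Definition class_weight (D : diagram) (C : {set assign D}) : int :=
  if [pick a in C] is Some a then weight D a else 0%R.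

(* Phi_theta(D) as a multiset (a list up to permutation) *)
Definition Phi (D : diagram) : seq int :=
  [seq class_weight D C | C <- enum (colorings D)].
End Colorings.

(* The specific data: trivial quandle of order 4.
   Element (b, p): b = false for index 1, true for index 2; p = primed. *)
Definition Q := (bool * bool)%type.
Definition e1 : Q := (false, false).
Definition e1' : Q := (false, true).
Definition e2 : Q := (true, false).
Definition e2' : Q := (true, true).
Definition qop (x y : Q) : Q := x.
Definition qrho (x : Q) : Q := (x.1, ~~ x.2).
Definition chi (a b x y : Q) : int := if (x == a) && (y == b) then 1%R else 0%R.
Definition theta6 (x y : Q) : int :=
  (chi e1 e2 x y + chi e1' e2' x y - chi e1' e2 x y - chi e1 e2' x y)%R.

Definition Phi_theta (D : diagram) : seq int := @Phi Q qop qrho theta6 D.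

(* Since the quandle is trivial, the crossing conditions only say that the
   label of a strand, read with the normal induced by an orientation, stays
   the same along a component; up to basic inversions the colorings are thus
   the 16 pairs (x, y) of labels of the two components.  A crossing of the
   first component under the second contributes theta(x, y) times its sign,
   one of the second under the first theta(y, x) times its sign, and the
   other crossings nothing.  So the weight of (x, y) is
   theta(x, y) S_12 + theta(y, x) S_21, and it remains to see that
   S_12 = S_21 (their average being the linking number).
   On a planar 4-valent map, any function on half-edges that is
   antisymmetric along edges and sums to zero around vertices is the
   increment of a function on regions; this is a dimension count based on
   Euler's formula.  Applied to the first component it yields its winding
   number around each region, and adding up the jumps of the winding number
   along the semi-arcs of the second component gives S_21 - S_12 = 0. *)

From HB Require Import structures.
From mathcomp Require Import all_boot all_order all_algebra.
From mathcomp Require Import zify.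
From mathcomp.algebra_tactics Require Import ring.
Set Implicit Arguments. Unset Strict Implicit. Unset Printing Implicit Defensive.
Import Order.TTheory GRing.Theory Num.Theory.
Local Open Scope ring_scope.

Section FunRows.
Variables (F : fieldType) (T : finType).
Local Notation N := #|T|.

Definition frow (u : T -> F) : 'rV[F]_N := \row_j u (enum_val j).
Definition rowf (v : 'rV[F]_N) (x : T) : F := v 0 (enum_rank x).

Lemma frowK u x : rowf (frow u) x = u x.
Proof. by rewrite /rowf /frow mxE enum_rankK. Qed.

Lemma rowf_inj v1 v2 : (forall x, rowf v1 x = rowf v2 x) -> v1 = v2.
Proof. by move=> E; apply/rowP=> j; rewrite -[j]enum_valK; apply: E. Qed.

Lemma rowfD u v x : rowf (u + v) x = rowf u x + rowf v x.
Proof. by rewrite /rowf mxE. Qed.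

Lemma rowfB u v x : rowf (u - v) x = rowf u x - rowf v x.
Proof. by rewrite /rowf !mxE. Qed.

Lemma rowf_mul m (v : 'rV[F]_N) (A : 'M[F]_(N, m)) j :
  (v *m A) 0 j = \sum_x rowf v x * A (enum_rank x) j.
Proof.
rewrite mxE (big_enum_val (A := predT) (fun x => rowf v x * A (enum_rank x) j)) /=.
by apply: eq_bigr => i _; rewrite /rowf enum_valK.
Qed.

Definition precomp_mx (p : T -> T) : 'M[F]_N :=
  \matrix_(i, j) ((enum_val i == p (enum_val j))%:R).

Lemma rowf_precomp v p x : rowf (v *m precomp_mx p) x = rowf v (p x).
Proof.
rewrite /rowf rowf_mul (bigD1 (p x)) //= big1 ?addr0.
  by rewrite mxE !enum_rankK eqxx mulr1.
by move=> y /negPf ne_y; rewrite mxE !enum_rankK ne_y mulr0.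
Qed.

Definition conn_classes (r : rel T) : {set {set T}} :=
  [set [set y | connect r x y] | x in T].

Definition class_mx (r : rel T) : 'M[F]_(#|conn_classes r|, N) :=
  \matrix_(i, j) ((enum_val j \in (enum_val i : {set T}))%:R).

Variable r : rel T.
Hypothesis r_sym : connect_sym r.

Lemma conn_classes_eq K z : K \in conn_classes r -> z \in K -> K = [set y | connect r z y].
Proof.
case/imsetP=> x _ -> ; rewrite inE => xz; apply/setP=> y; rewrite !inE.
apply/idP/idP=> [xy|]; last exact: connect_trans.
by rewrite (connect_trans _ xy) // r_sym.
Qed.

Lemma conn_classes_closed K x y : K \in conn_classes r -> r x y -> (x \in K) = (y \in K).
Proof.
case/imsetP=> z _ -> xy; rewrite !inE; apply/idP/idP=> zx.
  exact: connect_trans zx (connect1 xy).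
by apply: connect_trans zx _; rewrite r_sym; apply: connect1.
Qed.

Lemma sub_class_mx_const v x y : (v <= class_mx r)%MS -> r x y -> rowf v x = rowf v y.
Proof.
case/submxP=> B -> xy; rewrite /rowf !mxE; apply: eq_bigr => i _.
by rewrite !mxE !enum_rankK (conn_classes_closed (enum_valP i) xy).
Qed.

Lemma const_sub_class_mx v :
  (forall x y, r x y -> rowf v x = rowf v y) -> (v <= class_mx r)%MS.
Proof.
move=> v_const; apply/submxP.
pose val_on (K : {set T}) := if [pick z in K] is Some z then rowf v z else 0.
exists (\row_i val_on (enum_val i)); apply: rowf_inj => x; rewrite /rowf mxE.
have Kx : [set y | connect r x y] \in conn_classes r by apply: imset_f.
rewrite (bigD1 (enum_rank_in Kx [set y | connect r x y])) //= big1.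
  rewrite !mxE enum_rankK !enum_rankK_in // inE connect0 mulr1 addr0 /val_on.
  case: pickP => [z|]; last by move/(_ x); rewrite inE connect0.
  rewrite inE => xz.
  have cl : closed r [pred t | rowf v t == rowf v x].
    by move=> a b ab; rewrite !inE (v_const _ _ ab).
  by have := closed_connect cl xz; rewrite !inE eqxx => /esym/eqP.
move=> i ne_i; rewrite !mxE enum_rankK.
have [xi|] := boolP (x \in enum_val i); last by rewrite mulr0.
case/eqP: ne_i; apply: enum_val_inj; rewrite enum_rankK_in //.
exact: conn_classes_eq (enum_valP i) xi.
Qed.

Lemma rank_class_mx : \rank (class_mx r) = #|conn_classes r|.
Proof.
apply/eqP; rewrite eqn_leq rank_leq_row /=.
pose R : 'M[F]_(N, #|conn_classes r|) :=
  \matrix_(j, i) ([pick z in (enum_val i : {set T})] == Some (enum_val j))%:R.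
suff RK : class_mx r *m R = 1%:M.
  by rewrite -{1}(mxrank1 F #|conn_classes r|) -RK mxrankM_maxl.
apply/matrixP=> i i'; rewrite !mxE.
have [z pick_z z_i'] : exists2 z, [pick z in (enum_val i' : {set T})] = Some z
                                & z \in (enum_val i' : {set T}).
  case: pickP => [z|]; first by exists z.
  by have /imsetP[x _ ->] := enum_valP i'; move/(_ x); rewrite inE connect0.
rewrite (bigD1 (enum_rank z)) //= big1.
  rewrite !mxE !enum_rankK pick_z eqxx mulr1 addr0.
  have [->|ne_ii'] := eqVneq i i'; first by rewrite z_i'.
  have [z_i|//] := boolP (z \in _).
  case/eqP: ne_ii'; apply: enum_val_inj.
  by rewrite (conn_classes_eq (enum_valP i) z_i) (conn_classes_eq (enum_valP i') z_i').
move=> j /negPf ne_j; rewrite !mxE pick_z (inj_eq (@Some_inj _)).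
have [z_j|_] := eqVneq z (enum_val j); last by rewrite mulr0.
by rewrite z_j enum_valK eqxx in ne_j.
Qed.

End FunRows.

Arguments rank_class_mx {F T r}.

Lemma rot4_inj : injective rot4.
Proof.
move=> x y /(congr1 val); rewrite /= !inordK ?ltn_mod // => E; apply/val_inj.
by case: x y E => [[|[|[|[|?]]]] ?] [[|[|[|[|?]]]] ?].
Qed.

Lemma rot4_0 : rot4 i0 = i1. Proof. by apply/val_inj; rewrite /= inordK. Qed.
Lemma rot4_1 : rot4 i1 = i2. Proof. by apply/val_inj; rewrite /= inordK. Qed.
Lemma rot4_2 : rot4 i2 = i3. Proof. by apply/val_inj; rewrite /= inordK. Qed.
Lemma rot4_3 : rot4 i3 = i0. Proof. by apply/val_inj; rewrite /= inordK. Qed.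
Lemma opp4_0 : opp4 i0 = i2. Proof. by apply/val_inj; rewrite /= inordK. Qed.
Lemma opp4_1 : opp4 i1 = i3. Proof. by apply/val_inj; rewrite /= inordK. Qed.
Lemma opp4_2 : opp4 i2 = i0. Proof. by apply/val_inj; rewrite /= inordK. Qed.
Lemma opp4_3 : opp4 i3 = i1. Proof. by apply/val_inj; rewrite /= inordK. Qed.

Lemma ord4P (k : 'I_4) : [\/ k = i0, k = i1, k = i2 | k = i3].
Proof.
case: k => [[|[|[|[|//]]]] lt_k4];
  [apply: Or41 | apply: Or42 | apply: Or43 | apply: Or44]; exact/val_inj.
Qed.

Lemma big_ord4 (V : nmodType) (F : 'I_4 -> V) :
  \sum_(k < 4) F k = F i0 + F i1 + F i2 + F i3.
Proof.
rewrite !big_ord_recl big_ord0 addr0 /= !addrA.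
by congr (_ + _ + _ + _); congr F; apply/val_inj.
Qed.

Section PlanarMap.
Variable D : diagram.
Local Notation n := (ncross D).
Local Notation T := (slot (ncross D)).
Local Notation N := #|{: T}|.
Hypothesis glueK : involutive (glue D).
Hypothesis glue_neq : forall s, glue D s != s.
Local Notation glue_mx := (precomp_mx rat (glue D)).

Lemma glue_inj : injective (glue D).
Proof. exact: inv_inj. Qed.

Lemma sigma_inj : injective (sigma D).
Proof. by case=> c k [c' k'] [-> /rot4_inj ->]. Qed.

Lemma face_perm_inj : injective (face_perm D).
Proof. by move=> s t /sigma_inj /glue_inj. Qed.

Lemma card_slot : N = (4 * n)%N.
Proof. by rewrite card_prod !card_ord mulnC. Qed.

Lemma graph_rel_sym : connect_sym (graph_rel D).
Proof.
apply: sym_connect_sym => s t; rewrite /graph_rel.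
by apply/idP/idP => /or4P [] ->; rewrite ?orbT.
Qed.

Lemma face_rel_sym : connect_sym (frel (face_perm D)).
Proof. exact: fconnect_sym face_perm_inj. Qed.

(* Row vectors stand for functions on slots: the rows of [face_mx] span the
   functions constant on faces, and [kermx cocycle_mx] consists of the
   functions antisymmetric under [glue] with zero sum around each crossing. *)
Definition face_mx := class_mx rat (frel (face_perm D)).
Definition coboundary_mx : 'M[rat]_N := precomp_mx rat (sigma D) - 1%:M.
Definition vertex_mx : 'M[rat]_(N, n) := \matrix_(i, c) ((enum_val i).1 == c)%:R.
Definition cocycle_mx := row_mx (1%:M + glue_mx) vertex_mx.

Lemma rank_face_mx : \rank face_mx = nfaces D.
Proof. exact: rank_class_mx face_rel_sym. Qed.

Lemma rank_graph_mx : \rank (class_mx rat (graph_rel D)) = ngraphcomp D.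
Proof. exact: rank_class_mx graph_rel_sym. Qed.

Lemma rowf_face_mx v x : (v <= face_mx)%MS -> rowf v (face_perm D x) = rowf v x.
Proof.
move=> v_face.
by rewrite (sub_class_mx_const face_rel_sym (y := face_perm D x) v_face) /= ?eqxx.
Qed.

Lemma rowf_coboundary_mx v x :
  rowf (v *m coboundary_mx) x = rowf v (sigma D x) - rowf v x.
Proof. by rewrite mulmxBr mulmx1 rowfB rowf_precomp. Qed.

Lemma rowf_vertex_mx u c : (u *m vertex_mx) 0 c = \sum_(k < 4) rowf u (c, k).
Proof.
rewrite rowf_mul (eq_bigr (fun p : T => rowf u (p.1, p.2) * (p.1 == c)%:R)); last first.
  by case=> c' k _; rewrite mxE enum_rankK.
rewrite -(pair_bigA _ (fun a b => rowf u (a, b) * (a == c)%:R)) /=.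
rewrite (bigD1 c) //= [X in _ + X]big1 ?addr0 => [|c' /negPf ne_c].
  by apply: eq_bigr => k _; rewrite eqxx mulr1.
by apply: big1 => k _; rewrite ne_c mulr0.
Qed.

Lemma sub_ker_cocycle_mx u : (forall x, rowf u (glue D x) = - rowf u x) ->
  (forall c, \sum_(k < 4) rowf u (c, k) = 0) -> (u <= kermx cocycle_mx)%MS.
Proof.
move=> u_glue u_vertex.
rewrite sub_kermx mul_mx_row row_mx_eq0; apply/andP; split; apply/eqP.
  apply: rowf_inj => x; rewrite mulmxDr mulmx1 rowfD rowf_precomp u_glue.
  by rewrite /rowf mxE subrr.
by apply/rowP => c; rewrite rowf_vertex_mx u_vertex mxE.
Qed.

Lemma face_coboundary_sub_ker : (face_mx *m coboundary_mx <= kermx cocycle_mx)%MS.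
Proof.
apply/row_subP => i; rewrite row_mul.
have := row_sub i face_mx; move: (row i face_mx) => v v_face.
apply: sub_ker_cocycle_mx => [x|c].
  rewrite !rowf_coboundary_mx -(rowf_face_mx x v_face).
  by rewrite -[in rowf v (glue D x)](rowf_face_mx _ v_face) /face_perm glueK opprB.
rewrite (eq_bigr (fun k => rowf v (c, rot4 k) - rowf v (c, k))) => [|k _].
  by rewrite sumrB [X in _ - X](reindex_inj rot4_inj) subrr.
by rewrite rowf_coboundary_mx.
Qed.

Lemma rank_face_ker_coboundary :
  (\rank (face_mx :&: kermx coboundary_mx) <= ngraphcomp D)%N.
Proof.
rewrite -rank_graph_mx; apply: mxrankS; apply/row_subP => i.
have := row_sub i (face_mx :&: kermx coboundary_mx)%MS; move: (row i _) => u.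
rewrite sub_capmx => /andP[u_face /sub_kermxP u_ker].
have u_sigma x : rowf u (sigma D x) = rowf u x.
  by apply/eqP; rewrite -subr_eq0 -rowf_coboundary_mx u_ker /rowf mxE.
have u_glue x : rowf u (glue D x) = rowf u x.
  by rewrite -u_sigma -(rowf_face_mx x u_face).
apply: (const_sub_class_mx graph_rel_sym) => x y /or4P [] /eqP ->;
  by rewrite ?u_sigma ?u_glue.
Qed.

Lemma tr_glue_mx : glue_mx^T = glue_mx.
Proof. by apply/matrixP => i j; rewrite !mxE eq_sym (can2_eq glueK glueK). Qed.

(* [1 - P] is conjugate to [1 + P] by the diagonal sign matrix of a choice of
   one end per semi-arc, and [(1 + P) + (1 - P) = 2]. *)
Lemma rank_glue_sum : (2 * n <= \rank (1%:M + glue_mx)%R)%N.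
Proof.
set X := 1%:M + glue_mx; set Y := 1%:M - glue_mx.
pose sgn x : rat := if (enum_rank x < enum_rank (glue D x))%N then 1 else -1.
have sgn_glue x : sgn (glue D x) = - sgn x.
  rewrite /sgn glueK; have : enum_rank x != enum_rank (glue D x).
    by rewrite (inj_eq enum_rank_inj) eq_sym glue_neq.
  by case: ltngtP; rewrite ?opprK // => /val_inj ->; rewrite eqxx.
have sgn2 x : sgn x * sgn x = 1 by rewrite /sgn; case: ifP; rewrite ?mulrNN mulr1.
pose S : 'M[rat]_N := diag_mx (\row_j sgn (enum_val j)).
have YE : Y = S *m X *m S.
  apply/matrixP => i j; rewrite mul_mx_diag mul_diag_mx !mxE.
  have [->|ne_ij] := eqVneq i j.
    by rewrite eq_sym (negPf (glue_neq _)) addr0 mulr1 sgn2.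
  rewrite !add0r; case: (enum_val i =P glue D (enum_val j)) => [->|_] /=.
    by rewrite sgn_glue mulr1 mulNr sgn2.
  by rewrite oppr0 mulr0 mul0r.
have rank_Y : (\rank Y <= \rank X)%N.
  by rewrite YE; apply: leq_trans (mxrankM_maxl _ _) (mxrankM_maxr _ _).
have sub_XY : (1%:M <= X + Y)%MS.
  have -> : (1%:M : 'M[rat]_N) = 2^-1 *: (X + Y).
    by apply/matrixP => a b; rewrite /X /Y !mxE; case: (a == b) => /=; field.
  by rewrite scalemx_sub // addmx_sub_adds.
have := leq_trans (mxrankS sub_XY) (mxrank_adds_leqif X Y).
by rewrite mxrank1 [X in (X <= _)%N -> _]card_slot; lia.
Qed.

Lemma rank_vertex_mx : (n <= \rank vertex_mx)%N.
Proof.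
pose R : 'M[rat]_(n, N) := \matrix_(c, j) (enum_val j == (c, i0))%:R.
suff RK : R *m vertex_mx = 1%:M by rewrite -{1}(mxrank1 rat n) -RK mxrankM_maxr.
apply/matrixP => c c'; rewrite !mxE (bigD1 (enum_rank (c, i0))) //= big1.
  by rewrite !mxE !enum_rankK eqxx mul1r addr0.
move=> j ne_j; rewrite !mxE; case: eqP => [E|]; last by rewrite mul0r.
by rewrite -E enum_valK eqxx in ne_j.
Qed.

Lemma rank_glue_vertex_cap :
  (\rank ((1%:M + glue_mx)%R^T :&: vertex_mx^T) <= ngraphcomp D)%N.
Proof.
rewrite -rank_graph_mx; apply: mxrankS; apply/row_subP => i.
have := row_sub i ((1%:M + glue_mx)%R^T :&: vertex_mx^T)%MS.
move: (row i _) => u; rewrite sub_capmx => /andP[/submxP[A ->] /submxP[B uB]].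
have u_glue x : rowf (A *m (1%:M + glue_mx)^T) (glue D x) =
                rowf (A *m (1%:M + glue_mx)^T) x.
  by rewrite linearD /= trmx1 tr_glue_mx mulmxDr mulmx1 !rowfD !rowf_precomp glueK addrC.
rewrite uB in u_glue *.
have u_vertex x : rowf (B *m vertex_mx^T) x = B 0 x.1.
  rewrite /rowf mxE (bigD1 x.1) //= big1 ?addr0 => [|c ne_c].
    by rewrite !mxE enum_rankK eqxx mulr1.
  by rewrite !mxE enum_rankK eq_sym (negPf ne_c) mulr0.
apply: (const_sub_class_mx graph_rel_sym) => x y /or4P [] /eqP ->;
  by rewrite ?u_glue ?u_vertex.
Qed.

Lemma rank_cocycle_mx : (3 * n <= \rank cocycle_mx + ngraphcomp D)%N.
Proof.
rewrite -mxrank_tr tr_row_mx -addsmxE.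
have := mxrank_sum_cap (1%:M + glue_mx)%R^T vertex_mx^T.
have := rank_glue_sum; have := rank_vertex_mx; have := rank_glue_vertex_cap.
rewrite !mxrank_tr.
(* The [set]s identify ranks that differ only in hidden arguments, for [lia]. *)
set G := (1%:M + glue_mx)%R^T.
set sum := \rank (G + vertex_mx^T)%MS; set cap := \rank (G :&: vertex_mx^T)%MS.
set rG := \rank (1%:M + glue_mx)%R; set rV := \rank vertex_mx.
lia.
Qed.

Hypothesis D_planar : planar D.

(* Counting dimensions with Euler's formula [nfaces = n + 2 * ngraphcomp]. *)
Lemma ker_cocycle_sub_face_coboundary :
  (kermx cocycle_mx <= face_mx *m coboundary_mx)%MS.
Proof.
have [le_rank eq_rank] := mxrank_leqif_sup face_coboundary_sub_ker.
rewrite -eq_rank eqn_leq le_rank /=.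
have := mxrank_mul_ker face_mx coboundary_mx.
rewrite rank_face_mx mxrank_ker [X in (X - _ <= _)%N]card_slot.
have := rank_cocycle_mx; have := rank_face_ker_coboundary; move: D_planar; rewrite /planar.
set im := \rank (face_mx *m coboundary_mx).
set cap := \rank (face_mx :&: kermx coboundary_mx)%MS.
set rC := \rank cocycle_mx; lia.
Qed.

Theorem planar_cocycle_potential (w : T -> rat) :
  (forall x, w (glue D x) = - w x) -> (forall c, \sum_(k < 4) w (c, k) = 0) ->
  exists h : T -> rat, (forall x, h (face_perm D x) = h x) /\
                       (forall x, h (sigma D x) = h x + w x).
Proof.
move=> w_glue w_vertex.
have w_ker : (frow w <= kermx cocycle_mx)%MS.
  apply: sub_ker_cocycle_mx => [x|c]; first by rewrite !frowK.
  by rewrite (eq_bigr (fun k => w (c, k))) // => k _; rewrite frowK.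
have /submxP [B wE] := submx_trans w_ker ker_cocycle_sub_face_coboundary.
exists (rowf (B *m face_mx)); split => [x|x].
  by apply: rowf_face_mx; apply: submxMl.
by rewrite -(frowK w x) wE mulmxA rowf_coboundary_mx addrC subrK.
Qed.

End PlanarMap.

Lemma sum_antisym (R : numDomainType) (T : finType) (g : T -> T) (F : T -> R) :
  involutive g -> (forall x, F (g x) = - F x) -> \sum_x F x = 0.
Proof.
move=> gK F_g; have : \sum_x F x = - \sum_x F x.
  by rewrite {1}(reindex_inj (inv_inj gK)) -sumrN; apply: eq_bigr => x _; rewrite F_g.
by move/eqP; rewrite -subr_eq0 opprK -mulr2n mulrn_eq0 => /eqP.
Qed.

Section Orientation.
Variables (D : diagram) (o : slot (ncross D) -> bool).
Hypothesis o_orient : orientation D o.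

Lemma orient_glue s : o (glue D s) = ~~ o s.
Proof. by case: o_orient. Qed.

Lemma orient_i2 c : o (c, i2) = ~~ o (c, i0).
Proof. by case: o_orient => _ /(_ c); case: (o (c, i0)); case: (o (c, i2)). Qed.

Lemma orient_i3 c : o (c, i3) = ~~ o (c, i1).
Proof. by case: o_orient => _ _ /(_ c); case: (o (c, i1)); case: (o (c, i3)). Qed.

End Orientation.

Section Strands.
Variable D : diagram.
Local Notation T := (slot (ncross D)).

Definition strand_closed (A : {set T}) :=
  forall x y, strand_rel D x y -> (x \in A) = (y \in A).

Lemma strand_rel_sym : connect_sym (strand_rel D).
Proof.
apply: sym_connect_sym => s t; rewrite /strand_rel.
by apply/idP/idP => /or4P [] ->; rewrite ?orbT.
Qed.

Lemma link_comp_refl s : s \in link_comp D s.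
Proof. by rewrite inE connect0. Qed.

Lemma link_comp_eq s t : t \in link_comp D s -> link_comp D t = link_comp D s.
Proof.
rewrite inE => st; apply/setP => u; rewrite !inE; apply/idP/idP => [tu|]; last first.
  by apply: connect_trans; rewrite strand_rel_sym.
exact: connect_trans st tu.
Qed.

Lemma link_comp_closed s : strand_closed (link_comp D s).
Proof.
move=> x y xy; rewrite !inE; apply/idP/idP => sx; first exact: connect_trans sx (connect1 xy).
by apply: connect_trans sx _; rewrite strand_rel_sym; apply: connect1.
Qed.

Variable A : {set T}.
Hypothesis A_closed : strand_closed A.

Lemma strand_closed_glue s : (glue D s \in A) = (s \in A).
Proof. by apply/esym/A_closed; rewrite /strand_rel eqxx. Qed.

Lemma strand_closed_opp c k : ((c, opp4 k) \in A) = ((c, k) \in A).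
Proof. by apply/esym/A_closed; rewrite /strand_rel eqxx !orbT. Qed.

End Strands.

Definition mixed_sign_sum (D : diagram) (o : slot (ncross D) -> bool)
    (A : {set slot (ncross D)}) : int :=
  \sum_(c < ncross D | ((c, i0) \in A) && ((c, i1) \notin A)) crossing_sign D o c.

Section CrossingBalance.
Variable D : diagram.
Local Notation T := (slot (ncross D)).
Hypothesis glueK : involutive (glue D).
Variable o : T -> bool.
Hypothesis o_orient : orientation D o.
Variable A : {set T}.
Hypothesis A_closed : strand_closed A.

Definition strand_cochain (x : T) : rat :=
  if x \in A then (if o x then -1 else 1) else 0.

Lemma strand_cochain_glue x : strand_cochain (glue D x) = - strand_cochain x.
Proof.
rewrite /strand_cochain (strand_closed_glue A_closed) orient_glue //.
by case: (x \in A); case: (o x); rewrite ?opprK ?oppr0.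
Qed.

Lemma strand_cochain_vertex c : \sum_(k < 4) strand_cochain (c, k) = 0.
Proof.
rewrite big_ord4 /strand_cochain orient_i2 // orient_i3 //.
rewrite -opp4_0 -opp4_1 !(strand_closed_opp A_closed).
by case: ((c, i0) \in A); case: ((c, i1) \in A); case: (o (c, i0)); case: (o (c, i1));
  rewrite /=; ring.
Qed.

Section Winding.
(* [h] is the winding number of the components in [A] around each region. *)
Variable h : T -> rat.
Hypothesis h_face : forall x, h (face_perm D x) = h x.
Hypothesis h_sigma : forall x, h (sigma D x) = h x + strand_cochain x.

Definition left_winding (x : T) : rat := if o x then h x else h (sigma D x).

(* Each semi-arc off [A] carries its winding number, signed by the direction
   in which it is traversed; the two ends of a semi-arc cancel. *)
Definition off_flux (x : T) : rat :=
  if x \in A then 0 else if o x then - left_winding x else left_winding x.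

Lemma left_winding_glue x : left_winding (glue D x) = left_winding x.
Proof.
rewrite /left_winding orient_glue //; case: (o x) => /=; first exact: h_face.
by rewrite -(h_face (glue D x)) /face_perm glueK.
Qed.

Lemma off_flux_glue x : off_flux (glue D x) = - off_flux x.
Proof.
rewrite /off_flux (strand_closed_glue A_closed) orient_glue // left_winding_glue.
by case: (x \in A); case: (o x); rewrite ?opprK ?oppr0.
Qed.

Lemma off_flux_vertex c :
  \sum_(k < 4) off_flux (c, k) =
    (if ((c, i0) \in ~: A) && ((c, i1) \notin ~: A) then (crossing_sign D o c)%:~R else 0)
  - (if ((c, i0) \in A) && ((c, i1) \notin A) then (crossing_sign D o c)%:~R else 0).
Proof.
have h_rot k : h (c, rot4 k) = h (c, k) + strand_cochain (c, k) := h_sigma (c, k).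
have := h_rot i0; have := h_rot i1; have := h_rot i2; rewrite rot4_0 rot4_1 rot4_2.
move=> h3 h2 h1; rewrite big_ord4 /off_flux /left_winding /sigma /=.
rewrite !rot4_0 !rot4_1 !rot4_2 !rot4_3.
rewrite h3 h2 h1 /crossing_sign /strand_cochain !in_setC negbK orient_i2 // orient_i3 //.
rewrite -opp4_0 -opp4_1 !(strand_closed_opp A_closed).
by case: ((c, i0) \in A); case: ((c, i1) \in A); case: (o (c, i0)); case: (o (c, i1));
  rewrite /= ?rmorphN ?rmorph1; ring.
Qed.

End Winding.

Hypothesis glue_neq : forall s, glue D s != s.
Hypothesis D_planar : planar D.

Theorem crossing_balance : mixed_sign_sum o A = mixed_sign_sum o (~: A).
Proof.
have [h [h_face h_sigma]] := planar_cocycle_potential glueK glue_neq D_planar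
  strand_cochain_glue strand_cochain_vertex.
have := sum_antisym glueK (off_flux_glue h_face).
rewrite (eq_bigr (fun p : T => off_flux h (p.1, p.2))); last by case.
rewrite -(pair_bigA _ (fun c k => off_flux h (c, k))) /=.
rewrite (eq_bigr _ (fun c _ => off_flux_vertex h_sigma c)) sumrB -!big_mkcond /=.
move/eqP; rewrite subr_eq0 -!rmorph_sum /= eqr_int => /eqP.
by rewrite /mixed_sign_sum.
Qed.

End CrossingBalance.

Local Notation qbinv := (binv Q qrho).
Local Notation qequiv D := (inv_equiv Q qrho D).
Local Notation is_qcoloring D := (is_coloring Q qop qrho D).
Local Notation qweight D := (weight Q qrho theta6 D).

Lemma qrhoK : involutive qrho.
Proof. by case=> a b; rewrite /qrho /= negbK. Qed.

Lemma binvK f : involutive (qbinv f).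
Proof. by case: f => -[d l] //=; rewrite negbK qrhoK. Qed.

Lemma binvD f g p : qbinv f (qbinv g p) = qbinv (f (+) g) p.
Proof. by case: f; case: g; case: p => d l //=; rewrite negbK qrhoK. Qed.

Section InversionEquivalence.
Variable D : diagram.
Local Notation T := (slot (ncross D)).
Implicit Types a b c : assign Q D.

Lemma qequivP a b :
  reflect (exists f : {ffun T -> bool}, exists g : {ffun 'I_(nfree D) -> bool},
             [/\ forall s, f (glue D s) = f s,
                 forall s, b.1 s = qbinv (f s) (a.1 s) &
                 forall i, b.2 i = qbinv (g i) (a.2 i)])
          (qequiv D a b).
Proof.
apply: (iffP existsP) => [[f /existsP [g /and3P [/forallP f_glue /forallP b1 /forallP b2]]]|].
  by exists f, g; split => x; apply/eqP.
case=> f [g [f_glue b1 b2]]; exists f; apply/existsP; exists g.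
by apply/and3P; split; apply/forallP => x; apply/eqP.
Qed.

Lemma qequiv_refl a : qequiv D a a.
Proof.
by apply/qequivP; exists [ffun=> false], [ffun=> false]; split => x; rewrite !ffunE.
Qed.

Lemma qequiv_sym a b : qequiv D a b -> qequiv D b a.
Proof.
move/qequivP => [f [g [f_glue b1 b2]]]; apply/qequivP; exists f, g.
by split => // x; rewrite ?b1 ?b2 binvK.
Qed.

Lemma qequiv_trans a b c : qequiv D a b -> qequiv D b c -> qequiv D a c.
Proof.
move/qequivP => [f [g [f_glue b1 b2]]] /qequivP [f' [g' [f'_glue c1 c2]]].
apply/qequivP; exists [ffun s => f' s (+) f s], [ffun i => g' i (+) g i].
split => x; rewrite !ffunE; first by rewrite f_glue f'_glue.
  by rewrite c1 b1 binvD.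
by rewrite c2 b2 binvD.
Qed.

Lemma qequiv_class a b :
  qequiv D a b -> [set c | qequiv D a c] = [set c | qequiv D b c].
Proof.
move=> ab; apply/setP => c; rewrite !inE; apply/idP/idP; last exact: qequiv_trans.
exact: qequiv_trans (qequiv_sym ab).
Qed.

Lemma qweight_equiv a b : qequiv D a b -> qweight D a = qweight D b.
Proof.
move/qequivP => [f [_ [_ b1 _]]]; apply: eq_bigr => c _ /=; rewrite !b1.
by case: (f (c, i0)); case: (f (c, i1)); case: (a.1 (c, i0)) => -[] ?;
  case: (a.1 (c, i1)) => -[] ?; rewrite /= ?qrhoK.
Qed.

End InversionEquivalence.

(* In the trivial quandle, both conditions at a crossing say that the labels
   of the two halves of a strand agree once their normals are made coherent. *)
Lemma over_label_agree (d1 d3 o1 : bool) (l1 l3 : Q) :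
  l1 == (if d1 != d3 then l3 else qrho l3) ->
  (if d3 == ~~ o1 then l3 else qrho l3) = (if d1 == o1 then l1 else qrho l1).
Proof. by move/eqP ->; case: d1; case: d3; case: o1; rewrite /= ?qrhoK. Qed.

Lemma under_label_agree (d0 d1 d2 o0 : bool) (l0 l2 : Q) :
  (if d1 then qop l2 l0 == (if d0 != d2 then l0 else qrho l0)
   else qop l0 l2 == (if d0 != d2 then l2 else qrho l2)) ->
  (if d2 == ~~ o0 then l2 else qrho l2) = (if d0 == o0 then l0 else qrho l0).
Proof.
by rewrite /qop; case: d1 => /eqP ->; case: d0; case: d2; case: o0; rewrite /= ?qrhoK.
Qed.

Section OrientedLabels.
Variable D : diagram.
Local Notation T := (slot (ncross D)).
Variable o : T -> bool.
Hypothesis o_orient : orientation D o.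

(* The label of the semi-arc at [s] after a basic inversion making its
   normal the one induced by the orientation [o]. *)
Definition olabel (a : assign Q D) (s : T) : Q :=
  if (a.1 s).1 == o s then (a.1 s).2 else qrho (a.1 s).2.

Definition free_label (a : assign Q D) (i : 'I_(nfree D)) : Q :=
  if (a.2 i).1 then (a.2 i).2 else qrho (a.2 i).2.

Variable a : assign Q D.
Hypothesis a_col : is_qcoloring D a.

Lemma coloring_glue s :
  (a.1 (glue D s)).1 = ~~ (a.1 s).1 /\ (a.1 (glue D s)).2 = (a.1 s).2.
Proof. by case/andP: a_col => /forallP /(_ s) /andP [/eqP -> /eqP ->]. Qed.

Lemma olabel_glue s : olabel a (glue D s) = olabel a s.
Proof.
rewrite /olabel; have [-> ->] := coloring_glue s; rewrite orient_glue //.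
by case: (a.1 s).1; case: (o s).
Qed.

Lemma olabel_opp c k : olabel a (c, opp4 k) = olabel a (c, k).
Proof.
have [_ /forallP /(_ c) /and3P [over under _]] := andP a_col.
have E2 : olabel a (c, i2) = olabel a (c, i0).
  by rewrite /olabel orient_i2 //; apply: under_label_agree under.
have E3 : olabel a (c, i3) = olabel a (c, i1).
  by rewrite /olabel orient_i3 //; apply: over_label_agree over.
by case: (ord4P k) => ->; rewrite ?opp4_0 ?opp4_1 ?opp4_2 ?opp4_3.
Qed.

Lemma olabel_connect x y : connect (strand_rel D) x y -> olabel a x = olabel a y.
Proof.
have cl : closed (strand_rel D) [pred t | olabel a t == olabel a x].
  move=> u v /or4P [] /eqP ->; rewrite !inE ?olabel_glue //.
  - by case: u => c k; rewrite olabel_opp.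
  - by case: v => c k; rewrite olabel_opp.
by move=> xy; have := closed_connect cl xy; rewrite !inE eqxx => /esym/eqP.
Qed.

End OrientedLabels.

Section TwoComponents.
Variable D : diagram.
Local Notation n := (ncross D).
Local Notation T := (slot (ncross D)).

Definition crossed_comps : {set {set T}} := [set link_comp D s | s : T].

Definition first_comp : {set T} :=
  if [pick s : T] is Some s then link_comp D s else set0.

Lemma first_comp_closed : strand_closed first_comp.
Proof.
by rewrite /first_comp; case: pickP => [s _|_ x y _]; [apply: link_comp_closed | rewrite !inE].
Qed.

Lemma link_comp_first s : s \in first_comp -> link_comp D s = first_comp.
Proof.
by rewrite /first_comp; case: pickP => [s0 _|_]; [apply: link_comp_eq | rewrite inE].
Qed.

Lemma first_comp_connect s t :
  s \in first_comp -> t \in first_comp -> connect (strand_rel D) s t.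
Proof. by move=> /link_comp_first <-; rewrite inE. Qed.

Hypothesis two_comps : ncomponents D = 2%N.

Lemma two_components_cases :
  [\/ [/\ nfree D = 0%N, exists s, s \in first_comp
        & exists2 s1, s1 \notin first_comp &
            forall s, s \notin first_comp -> connect (strand_rel D) s1 s],
      [/\ nfree D = 1%N, #|crossed_comps| = 1%N, exists s, s \in first_comp
        & forall s, s \in first_comp]
    | [/\ n = 0%N, nfree D = 2%N & #|crossed_comps| = 0%N]].
Proof.
have ncomps : (#|crossed_comps| + nfree D)%N = 2%N := two_comps.
rewrite /first_comp; case: pickP => [s0 _ | no_slot]; last first.
  have n0 : n = 0%N by case: n no_slot => // m /(_ (ord0, i0)) /=.
  have c0 : crossed_comps = set0.
    by apply/setP => K; rewrite inE; apply/imsetP => -[s _ _]; have := no_slot s.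
  by apply: Or33; split => //; move: ncomps; rewrite c0 cards0.
have s0_comp : link_comp D s0 \in crossed_comps by apply: imset_f.
have [all_s0 | /forallPn [s1 s1_out]] := boolP [forall s, s \in link_comp D s0].
  have one : crossed_comps = [set link_comp D s0].
    apply/setP => K; rewrite inE; apply/imsetP/eqP => [[s _ ->]|->]; last by exists s0.
    exact/link_comp_eq/(forallP all_s0).
  apply: Or32; split; try by [exists s0; apply: link_comp_refl | apply/forallP].
    by move: ncomps; rewrite one cards1; lia.
  by rewrite one cards1.
have s1_comp : link_comp D s1 \in crossed_comps by apply: imset_f.
have ne01 : link_comp D s0 != link_comp D s1.
  by apply: contraNneq s1_out => ->; apply: link_comp_refl.
have sub2 : [set link_comp D s0; link_comp D s1] \subset crossed_comps.
  by apply/subsetP => K; rewrite !inE => /orP [] /eqP ->.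
have c2 : #|crossed_comps| = 2%N.
  apply/eqP; rewrite eqn_leq; apply/andP; split.
    by rewrite -[X in (_ <= X)%N]ncomps leq_addr.
  by have := subset_leq_card sub2; rewrite cards2 ne01.
have two : [set link_comp D s0; link_comp D s1] = crossed_comps.
  by apply/eqP; rewrite eqEcard sub2 cards2 ne01 c2.
apply: Or31; split; first by move: ncomps; rewrite c2; lia.
  by exists s0; apply: link_comp_refl.
exists s1 => // s s_out; have : link_comp D s \in crossed_comps by apply: imset_f.
rewrite -two !inE => /orP [] /eqP s_comp.
  by move: s_out; rewrite -s_comp link_comp_refl.
by have := link_comp_refl s; rewrite s_comp inE.
Qed.

Variable o : T -> bool.
Hypothesis o_orient : orientation D o.

(* The components are numbered [first_comp], the other crossed component,
   then the free circles; component [0] is labelled [x] and the other one [y]. *)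
Definition comp_label (x y : Q) (s : T) : Q := if s \in first_comp then x else y.
Definition free_comp_label (x y : Q) (i : 'I_(nfree D)) : Q :=
  if (i + #|crossed_comps|)%N == 0%N then x else y.

Definition std_assign (x y : Q) : assign Q D :=
  ([ffun s => (o s, comp_label x y s)], [ffun i => (true, free_comp_label x y i)]).

Lemma std_assign_coloring x y : is_qcoloring D (std_assign x y).
Proof.
apply/andP; split; apply/forallP.
  move=> s; rewrite !ffunE /= orient_glue // /comp_label.
  by rewrite (strand_closed_glue first_comp_closed) !eqxx.
move=> c; rewrite /cross_ok !ffunE /= /comp_label orient_i2 // orient_i3 // -opp4_0 -opp4_1.
rewrite !(strand_closed_opp first_comp_closed).
by case: (o (c, i0)); case: (o (c, i1)); rewrite /qop /= !eqxx.
Qed.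

Lemma equiv_std_assign a x y : is_qcoloring D a ->
  (forall s, olabel o a s = comp_label x y s) ->
  (forall i, free_label a i = free_comp_label x y i) -> qequiv D (std_assign x y) a.
Proof.
move=> a_col a_slot a_free; apply/qequivP.
exists [ffun s => (a.1 s).1 != o s], [ffun i => ~~ (a.2 i).1].
split => z; rewrite !ffunE.
- have [-> _] := coloring_glue a_col z; rewrite orient_glue //.
  by case: (a.1 z).1; case: (o z).
- rewrite -a_slot /olabel; case: (a.1 z) => d l /=.
  by case: d; case: (o z); rewrite /= ?qrhoK.
- by rewrite -a_free /free_label; case: (a.2 z) => -[] l; rewrite /= ?qrhoK.
Qed.

Lemma std_assign_labels x y b : qequiv D (std_assign x y) b ->
  (forall s, olabel o b s = comp_label x y s) /\
  (forall i, free_label b i = free_comp_label x y i).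
Proof.
move/qequivP => [f [g [_ b1 b2]]]; split => z.
  rewrite /olabel b1 ffunE; case: (f z) => /=; rewrite ?eqxx //.
  by case: (o z); rewrite /= qrhoK.
by rewrite /free_label b2 ffunE; case: (g z) => /=; rewrite ?qrhoK.
Qed.

Lemma std_assign_equiv_inj x y x' y' :
  qequiv D (std_assign x y) (std_assign x' y') -> (x, y) = (x', y').
Proof.
case/std_assign_labels => E_slot E_free.
have E_comp s : comp_label x y s = comp_label x' y' s.
  by rewrite -E_slot /olabel ffunE eqxx.
have E_free_comp i : free_comp_label x y i = free_comp_label x' y' i.
  by rewrite -E_free /free_label ffunE.
case: two_components_cases => [[_ [s0 s0A] [s1 s1A _]] | [nf1 c1 [s0 s0A] _] | [_ nf2 c0]].
- by have := E_comp s0; have := E_comp s1; rewrite /comp_label s0A (negPf s1A) => -> ->.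
- have lt0 : (0 < nfree D)%N by rewrite nf1.
  have := E_comp s0; have := E_free_comp (Ordinal lt0).
  by rewrite /comp_label /free_comp_label s0A c1 /= => -> ->.
- have lt0 : (0 < nfree D)%N by rewrite nf2.
  have lt1 : (1 < nfree D)%N by rewrite nf2.
  have := E_free_comp (Ordinal lt0); have := E_free_comp (Ordinal lt1).
  by rewrite /free_comp_label c0 /= => -> ->.
Qed.

Lemma equiv_std_assign_exists a : is_qcoloring D a ->
  exists x y, qequiv D (std_assign x y) a.
Proof.
move=> a_col; case: two_components_cases
  => [[nf0 [s0 s0A] [s1 _ s1_conn]] | [nf1 c1 [s0 s0A] allA] | [n0 nf2 c0]].
- exists (olabel o a s0), (olabel o a s1); apply: equiv_std_assign => // [s|i].
    rewrite /comp_label; case: ifPn => sA; symmetry; apply: olabel_connect => //.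
      exact: first_comp_connect s0A sA.
    exact: s1_conn.
  by case: i => m lt_m; exfalso; move: lt_m; rewrite nf0.
- have lt0 : (0 < nfree D)%N by rewrite nf1.
  exists (olabel o a s0), (free_label a (Ordinal lt0)); apply: equiv_std_assign => // [s|i].
    rewrite /comp_label allA; symmetry.
    by apply: olabel_connect => //; apply: first_comp_connect.
  rewrite /free_comp_label c1 addn1 /=; congr free_label; apply: val_inj => /=.
  by have := ltn_ord i; move: nf1; lia.
- have lt0 : (0 < nfree D)%N by rewrite nf2.
  have lt1 : (1 < nfree D)%N by rewrite nf2.
  exists (free_label a (Ordinal lt0)), (free_label a (Ordinal lt1)).
  apply: equiv_std_assign => // [[[c lt_c] k]|[[|[|i]] lt_i]].
  + by exfalso; move: lt_c; rewrite n0.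
  + by rewrite /free_comp_label c0 /=; congr free_label; apply: val_inj.
  + by rewrite /free_comp_label c0 /=; congr free_label; apply: val_inj.
  + by exfalso; move: lt_i; rewrite nf2.
Qed.

Definition std_class (p : Q * Q) : {set assign Q D} :=
  [set b | qequiv D (std_assign p.1 p.2) b].

Lemma std_class_inj : injective std_class.
Proof.
move=> [x y] [x' y'] E; apply: std_assign_equiv_inj.
have : std_assign x' y' \in std_class (x', y') by rewrite inE qequiv_refl.
by rewrite -E inE.
Qed.

Lemma colorings_std_class C :
  (C \in colorings Q qop qrho D) = [exists p, C == std_class p].
Proof.
apply/imsetP/existsP => [[a] | [[x y] /eqP ->]]; last first.
  by exists (std_assign x y); rewrite // inE std_assign_coloring.
rewrite inE => a_col ->; have [x [y xy_a]] := equiv_std_assign_exists a_col.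
by exists (x, y); rewrite /std_class /= (qequiv_class xy_a).
Qed.

Lemma class_weight_std p :
  class_weight Q qrho theta6 D (std_class p) = qweight D (std_assign p.1 p.2).
Proof.
rewrite /class_weight; case: pickP => [b|]; first by rewrite inE => /qweight_equiv ->.
by move/(_ (std_assign p.1 p.2)); rewrite inE qequiv_refl.
Qed.

Definition Q_pairs : seq (Q * Q) :=
  [seq (x, y) | x <- [:: e1; e1'; e2; e2'], y <- [:: e1; e1'; e2; e2']].

Lemma Phi_theta_std :
  perm_eq (Phi_theta D) [seq qweight D (std_assign p.1 p.2) | p <- Q_pairs].
Proof.
have std_enum : perm_eq (enum (colorings Q qop qrho D)) (map std_class Q_pairs).
  apply: uniq_perm; rewrite ?enum_uniq ?(map_inj_uniq std_class_inj) // => C.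
  rewrite mem_enum colorings_std_class.
  apply/existsP/mapP => [[p /eqP ->]|[p _ ->]]; last by exists p.
  by exists p => //; case: p => [[[] []] [[] []]].
rewrite /Phi_theta /Phi; apply: perm_trans (perm_map _ std_enum) _.
by rewrite -map_comp (eq_map class_weight_std).
Qed.

End TwoComponents.

Lemma crossing_weight (a0 a1 o0 o1 : bool) (x y : Q) :
  let l0 := if a0 then x else y in
  let l1 := if a1 then x else y in
  let sign : int := if o0 != o1 then 1 else -1 in
  eps01 * theta6 (if o0 then l0 else qrho l0) (if o1 then qrho l1 else l1) =
  (if a0 && ~~ a1 then theta6 x y * sign else 0) +
  (if ~~ a0 && a1 then theta6 y x * sign else 0).
Proof.
by case: a0; case: a1; case: o0; case: o1; case: x => [[] []]; case: y => [[] []].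
Qed.

Lemma theta6_spectrum (m : int) :
  perm_eq [seq theta6 p.1 p.2 * m + theta6 p.2 p.1 * m | p <- Q_pairs]
    [:: m; m; m; m; - m; - m; - m; - m; 0; 0; 0; 0; 0; 0; 0; 0].
Proof.
have -> : [seq theta6 p.1 p.2 * m + theta6 p.2 p.1 * m | p <- Q_pairs] =
          [seq k * m | k <- [seq theta6 p.1 p.2 + theta6 p.2 p.1 | p <- Q_pairs]].
  by rewrite -map_comp; apply: eq_map => p; rewrite /= -mulrDl.
have -> : [:: m; m; m; m; - m; - m; - m; - m; 0; 0; 0; 0; 0; 0; 0; 0] =
          [seq k * m | k <- [:: 1; 1; 1; 1; -1; -1; -1; -1; 0; 0; 0; 0; 0; 0; 0; 0]].
  by rewrite /= mul1r mulN1r mul0r.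
exact: perm_map.
Qed.

Section LinkingNumber.
Variable D : diagram.
Local Notation T := (slot (ncross D)).
Variable o : T -> bool.
Local Notation A := (first_comp D).

Lemma qweight_std x y : qweight D (std_assign o x y) =
  theta6 x y * mixed_sign_sum o A + theta6 y x * mixed_sign_sum o (~: A).
Proof.
rewrite /mixed_sign_sum !mulr_sumr big_mkcond [X in _ + X]big_mkcond -big_split /=.
apply: eq_bigr => c _ /=; rewrite !ffunE /= /comp_label !in_setC negbK.
exact: crossing_weight.
Qed.

Hypothesis glueK : involutive (glue D).
Hypothesis glue_neq : forall s, glue D s != s.
Hypothesis D_planar : planar D.
Hypothesis two_comps : ncomponents D = 2%N.
Hypothesis o_orient : orientation D o.

Lemma mixed_sign_sum_first_compC : mixed_sign_sum o (~: A) = mixed_sign_sum o A.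
Proof.
by rewrite (crossing_balance glueK o_orient (@first_comp_closed D) glue_neq D_planar).
Qed.

Lemma linking_number_first_comp : linking_number D o = mixed_sign_sum o A.
Proof.
rewrite /linking_number.
case: (two_components_cases two_comps) => [[_ _ [s1 s1A s1_conn]] | [_ _ _ allA] | [n0 _ _]].
- have comp_of s : link_comp D s = if s \in A then A else link_comp D s1.
    case: ifPn => sA; first exact: link_comp_first.
    by apply: link_comp_eq; rewrite inE s1_conn.
  have ne_s1 : (A == link_comp D s1) = false.
    by apply/negbTE; apply: contraNneq s1A => ->; apply: link_comp_refl.
  have ne_s1' : (link_comp D s1 == A) = false by rewrite eq_sym.
  have mixedA c : (link_comp D (c, i0) != link_comp D (c, i1)) && ((c, i0) \in A)
                  = ((c, i0) \in A) && ((c, i1) \notin A).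
    rewrite (comp_of (c, i0)) (comp_of (c, i1)).
    by case: ((c, i0) \in A); case: ((c, i1) \in A); rewrite /= ?eqxx ?ne_s1 ?ne_s1'.
  have mixedC c : (link_comp D (c, i0) != link_comp D (c, i1)) && ((c, i0) \notin A)
                  = ((c, i0) \in ~: A) && ((c, i1) \notin ~: A).
    rewrite !in_setC negbK (comp_of (c, i0)) (comp_of (c, i1)).
    by case: ((c, i0) \in A); case: ((c, i1) \in A); rewrite /= ?eqxx ?ne_s1 ?ne_s1'.
  rewrite (bigID (fun c => (c, i0) \in A)) /= (eq_bigl _ _ mixedA) (eq_bigl _ _ mixedC).
  rewrite -/(mixed_sign_sum o A) -/(mixed_sign_sum o (~: A)) mixed_sign_sum_first_compC.
  by rewrite -mulr2n -[X in (X %/ _)%Z]mulr_natr mulzK.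
- have comp_A s : link_comp D s = A by apply: link_comp_first.
  by rewrite /mixed_sign_sum !big1 ?div0z // => c; rewrite ?allA // !comp_A eqxx.
- by rewrite /mixed_sign_sum !big1 ?div0z // => -[c lt_c]; exfalso; move: lt_c; rewrite n0.
Qed.

End LinkingNumber.

Unset Implicit Arguments.

Theorem proposition6p6 (D : diagram) (o : slot (ncross D) -> bool) :
  wf_diagram D -> planar D -> ncomponents D = 2%N -> orientation D o ->
  let m := linking_number D o in
  perm_eq (Phi_theta D)
    [:: m; m; m; m; (- m)%R; (- m)%R; (- m)%R; (- m)%R;
        0%R; 0%R; 0%R; 0%R; 0%R; 0%R; 0%R; 0%R].
Proof.
move=> [glueK glue_neq] D_planar two_comps o_orient; cbv zeta.
set m := linking_number D o.
apply: perm_trans (Phi_theta_std two_comps o_orient) _.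
rewrite (eq_map (g := fun p => theta6 p.1 p.2 * m + theta6 p.2 p.1 * m)) => [|p].
  exact: theta6_spectrum.
by rewrite qweight_std mixed_sign_sum_first_compC // -linking_number_first_comp.
Qed.
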